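(* Let $\mathcal{F}$ be a hypothesis class of functions $\mathcal{X}\to\{\pm1\}$ with finite VC dimension $d$, and $\mathcal{P}$ an unknown distribution on $\mathcal{X}\times\{\pm1\}$. Consider a run of Active-ILESS with accuracy parameter $\epsilon$ and confidence $\delta$, and suppose the event $\mathcal{K}$ occurred. Then the total number of examples processed by the run (whether or not their labels were requested) is $$O\Big(\frac1\epsilon\ln\frac1\epsilon+\frac{R(f^* )}{\epsilon^2}\ln\frac{R(f^* )}{\epsilon^2}\Big),$$ where factors depending on $d$ and $\ln(1/\delta)$ are hidden in the $O$, and $R(f^* )$ is the minimal true risk over $\mathcal{F}$.
   Context: $R(f)=\Pr_{\mathcal{P}}[f(X)\ne Y]$; $\hat R(f,S)$ is the fraction of examples of $S$ misclassified by $f$; $f^*$ is any minimizer of $R$ over $\mathcal{F}$. Slacks: for $n>0$, $\delta'\in(0,1)$, $A=4d\ln\frac{16ne}{d\delta'}$, $\hat\sigma_{R-\hat R}(n,\delta',d,\hat r)=\frac{A}{n}+\sqrt{\frac{A}{n}\hat r}$, $\bar\sigma_{R-\hat R}(n,\delta',d,r)=\sqrt{\frac{A}{n}r}$, $\bar\sigma_{\hat R-R}(n,\delta',d,r)=\frac{A}{n}+\sqrt{\frac{A}{n}r}$, $\hat\sigma_{\hat R-R}(n,\delta',d,\hat r)=\sqrt{\frac{A}{n}\hat r}$, $\sigma_{R-\hat R}=\min\{\hat\sigma_{R-\hat R}(\cdot,\hat r),\bar\sigma_{R-\hat R}(\cdot,r)\}$, $\sigma_{\hat R-R}=\min\{\bar\sigma_{\hat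 R-R}(\cdot,r),\hat\sigma_{\hat R-R}(\cdot,\hat r)\}$. $AGR(G)=\{x:\text{all }f\in G\text{ agree on }x\}$. Active-ILESS (inputs: $\epsilon$ and/or budget $m$, confidence $\delta$, $\mathcal{F}$, $d$, i.i.d. stream $x_1,x_2,\dots$ from $\mathcal{P}$): initialize $\hat S=\emptyset$, $G_0=\mathcal{F}$, $t=1$; for each $x_t$: if $x_t\in AGR(G_{t-1})$ do not request its label and set $y_t=f(x_t)$ for any $f\in G_{t-1}$, otherwise request the true label $y_t$; add $(x_t,y_t)$ to $\hat S$; let $\hat f$ be an ERM on $\hat S$; if $\log_2t\in\mathbb{N}$: set $\sigma_{\rm Active}=\hat\sigma_{R-\hat R}(\tfrac t2,\tfrac\delta{2t},d,\hat R(\hat f,\hat S))+\bar\sigma_{\hat R-R}\big(\tfrac t2,\tfrac\delta{2t},d,\hat R(\hat f,\hat S)+\hat\sigma_{R-\hat R}(\tfrac t2,\tfrac\delta{2t},d,\hat R(\hat f,\hat S))\big)$, terminate returning $\hat f$ if $\epsilon$ was given and $\sigma_{\rm Active}<\epsilon$, set $G_t=\{f:\hat R(f,\hat S)\le\hat R(\hat f,\hat S)+\sigma_{\rm Active}\}$ and reset $\hat S=\emptyset$; otherwise $G_t=G_{t-1}$; if $m$ was given and $t=m$ terminate returning $\hat f$; increment $t$. For $G\subseteq\mathcal{F}$, $\mathcal{P}(G)$ is the distribution of $(X,Y')$ with $(X,Y)\sim\mathcal{P}$, $Y'$ = common value of $G$ at $X$ if $X\in AGR(G)$ and $Y'=Y$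 otherwise; $R_{\mathcal{P}(G)}(f)=\Pr[f(X)\ne Y']$. Event $\mathcal{K}$: for every $t=2^i$ reached and every $f\in\mathcal{F}$, with $\hat R(f)=\hat R(f,\hat S)$ for $\hat S$ at iteration $t$ before reset, $R_{\mathcal{P}(G_{t-1})}(f)\le\hat R(f)+\sigma_{R-\hat R}(\tfrac t2,\tfrac\delta{2t},d,R_{\mathcal{P}(G_{t-1})}(f),\hat R(f))$ and $\hat R(f)\le R_{\mathcal{P}(G_{t-1})}(f)+\sigma_{\hat R-R}(\tfrac t2,\tfrac\delta{2t},d,R_{\mathcal{P}(G_{t-1})}(f),\hat R(f))$. *)

From mathcomp Require Import all_boot all_order all_algebra all_classical all_reals all_analysis.
Set Implicit Arguments. Unset Strict Implicit. Unset Printing Implicit Defensive.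
Import Order.TTheory GRing.Theory Num.Theory.
Local Open Scope classical_set_scope.
Local Open Scope ring_scope.

(* Labels {-1,+1} are encoded by bool. Hypotheses are functions X -> bool;
   a hypothesis class is a set of such functions. *)

Definition shatters (X : Type) (F : set (X -> bool)) (n : nat) (s : 'I_n -> X) :=
  injective s /\ forall lab : 'I_n -> bool, exists f, F f /\ forall i, f (s i) = lab i.

Definition VCdim (X : Type) (F : set (X -> bool)) (d : nat) :=
  (exists s : 'I_d -> X, shatters F s) /\
  (forall s : 'I_d.+1 -> X, ~ shatters F s).

Section Slacks.
Variable R : realType.

Definition Acst (n dl : R) (d : nat) : R :=
  4 * d%:R * ln (16 * n * expR 1 / (d%:R * dl)).

Definition sig_hat_RmRh (n dl : R) (d : nat) (rh : R) : R :=
  Acst n dl d / n + Num.sqrt (Acst n dl d / n * rh).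
Definition sig_bar_RmRh (n dl : R) (d : nat) (r : R) : R :=
  Num.sqrt (Acst n dl d / n * r).
Definition sig_bar_RhmR (n dl : R) (d : nat) (r : R) : R :=
  Acst n dl d / n + Num.sqrt (Acst n dl d / n * r).
Definition sig_hat_RhmR (n dl : R) (d : nat) (rh : R) : R :=
  Num.sqrt (Acst n dl d / n * rh).

Definition sig_RmRh (n dl : R) (d : nat) (r rh : R) : R :=
  Num.min (sig_hat_RmRh n dl d rh) (sig_bar_RmRh n dl d r).
Definition sig_RhmR (n dl : R) (d : nat) (r rh : R) : R :=
  Num.min (sig_bar_RhmR n dl d r) (sig_hat_RhmR n dl d rh).

(* sigma_Active at iteration t, with rh = \hat R(\hat f, \hat S) *)
Definition sig_active (d : nat) (delta : R) (t : nat) (rh : R) : R :=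
  let n := t%:R / 2 in
  let dl := delta / (2 * t%:R) in
  sig_hat_RmRh n dl d rh + sig_bar_RhmR n dl d (rh + sig_hat_RmRh n dl d rh).

End Slacks.

Section Risks.
Variables (R : realType) (dX : measure_display) (X : measurableType dX).

Definition risk (P : probability (X * bool)%type R) (f : X -> bool) : R :=
  fine (P [set z | f z.1 != z.2]).

Definition AGR (G : set (X -> bool)) : set X :=
  [set x | forall f g, G f -> G g -> f x = g x].

(* R_{P(G)}(f) = Pr[f(X) <> Y'] with Y' the common value of G on AGR(G),
   and Y' = Y outside AGR(G). *)
Definition riskG (P : probability (X * bool)%type R) (G : set (X -> bool))
    (f : X -> bool) : R :=
  fine (P [set z | (AGR G z.1 /\ exists g, G g /\ f z.1 != g z.1)
                   \/ (~ AGR G z.1 /\ f z.1 != z.2)]).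
End Risks.

Definition is_pow2 (t : nat) := exists i : nat, t = (2 ^ i)%N.

Section Run.
Variables (R : realType) (X : Type).

(* Empirical risk of f on \hat S at iteration t = 2^i (before reset):
   \hat S consists of the examples s with t/2 < s <= t (for t = 1: s = 1).
   xs s is the s-th point of the stream, yl s the label stored for it. *)
Definition Rhat (xs : nat -> X) (yl : nat -> bool) (t : nat) (f : X -> bool) : R :=
  (\sum_((t %/ 2).+1 <= s < t.+1) ((f (xs s) != yl s) : nat))%:R
    / (t - t %/ 2)%:R.

(* A run of Active-ILESS (epsilon-version) on the stream xs (x_1, x_2, ...,
   index 0 unused) with true labels ys: G t is G_t, yl t is the label y_t added
   to \hat S (requested or inferred), fh t is the ERM computed at iteration t
   (only relevant when t is a power of 2). Any choice of ERM is allowed. *)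
Definition is_run (F : set (X -> bool)) (d : nat) (delta : R)
    (xs : nat -> X) (ys : nat -> bool)
    (G : nat -> set (X -> bool)) (yl : nat -> bool) (fh : nat -> X -> bool) :=
  G 0%N = F /\
  (forall t, (1 <= t)%N ->
     (((forall f g, G t.-1 f -> G t.-1 g -> f (xs t) = g (xs t)) ->
        forall g, G t.-1 g -> yl t = g (xs t)) /\
      (~ (forall f g, G t.-1 f -> G t.-1 g -> f (xs t) = g (xs t)) ->
        yl t = ys t))) /\
  (forall t, (1 <= t)%N -> is_pow2 t ->
     F (fh t) /\ forall f, F f -> Rhat xs yl t (fh t) <= Rhat xs yl t f) /\
  (forall t, (1 <= t)%N -> is_pow2 t ->
     G t = [set f | F f /\
        Rhat xs yl t f <= Rhat xs yl t (fh t)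
                          + sig_active d delta t (Rhat xs yl t (fh t))]) /\
  (forall t, (1 <= t)%N -> ~ is_pow2 t -> G t = G t.-1).

Definition stops (d : nat) (delta eps : R) (xs : nat -> X) (yl : nat -> bool)
    (fh : nat -> X -> bool) (t : nat) :=
  is_pow2 t /\ sig_active d delta t (Rhat xs yl t (fh t)) < eps.

Definition reached (d : nat) (delta eps : R) (xs : nat -> X) (yl : nat -> bool)
    (fh : nat -> X -> bool) (t : nat) :=
  forall s, (s < t)%N -> ~ stops d delta eps xs yl fh s.
End Run.

Definition eventK (R : realType) (dX : measure_display) (X : measurableType dX)
    (P : probability (X * bool)%type R) (F : set (X -> bool)) (d : nat)
    (delta eps : R) (xs : nat -> X) (G : nat -> set (X -> bool))
    (yl : nat -> bool) (fh : nat -> X -> bool) :=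
  forall t, is_pow2 t -> reached d delta eps xs yl fh t ->
  forall f, F f ->
    let n := t%:R / 2 in
    let dl := delta / (2 * t%:R) in
    riskG P (G t.-1) f <= Rhat R xs yl t f
        + sig_RmRh n dl d (riskG P (G t.-1) f) (Rhat R xs yl t f) /\
    Rhat R xs yl t f <= riskG P (G t.-1) f
        + sig_RhmR n dl d (riskG P (G t.-1) f) (Rhat R xs yl t f).

From mathcomp Require Import all_boot all_order all_algebra all_classical all_reals all_analysis.
From mathcomp Require Import ring lra.
Set Implicit Arguments.
Unset Strict Implicit.
Unset Printing Implicit Defensive.
Import Order.TTheory GRing.Theory Num.Theory.
Local Open Scope classical_set_scope.
Local Open Scope ring_scope.

(* On the event K the optimal hypothesis fstar is never eliminated.  Relabelling
   the examples on the agreement region AGR(G) of the surviving class G cannot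
   make another hypothesis beat fstar, since fstar is correct there and the labels
   are unchanged elsewhere; so K gives Rhat(fstar) <= Rhat(fh) + sigma_Active at
   every doubling time t.  Hence Rhat(fh) <= Rhat(fstar) <= rho + A/n + sqrt(rho A/n)
   with rho = R(fstar), which makes sigma_Active a constant multiple of
   A/n + sqrt(rho A/n), where A/n = O(d ln(t/delta) / t).  This drops below eps once
   t >= M ln M for M ~ d (1/eps + rho/eps^2), and the first power of two past that
   threshold, at which the run stops at the latest, is at most twice the threshold. *)

Lemma exists_first (Q : nat -> Prop) (n : nat) :
  ((forall s, (s < n)%N -> ~ Q s) -> Q n) ->
  exists2 m, (m <= n)%N & Q m /\ forall s, (s < m)%N -> ~ Q s.
Proof.
move=> Qn.
have ex : exists s, `[< Q s >] && (s <= n)%N.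
  have [[s sn Qs]|none] := pselect (exists2 s, (s < n)%N & Q s).
    by exists s; rewrite ltnW // andbT; apply/asboolP.
  by exists n; rewrite leqnn andbT; apply/asboolP/Qn => s sn Qs; apply: none; exists s.
case: (ex_minnP ex) => m /andP[/asboolP Qm mn] minm.
exists m => //; split => // s sm Qs.
have := minm s; rewrite (asboolT Qs) (leq_trans (ltnW sm) mn) => /(_ isT).
by rewrite leqNgt sm.
Qed.

Lemma reached_le (R : realType) (X : Type) d delta eps xs yl fh s t :
  (s <= t)%N -> @reached R X d delta eps xs yl fh t -> reached d delta eps xs yl fh s.
Proof. by move=> st reach_t u us; apply/reach_t/(leq_trans us st). Qed.

Section RealBounds.
Context {R : realType}.

Lemma exists_pow2_between (Y : R) : 1 <= Y -> exists k, Y <= (2 ^ k)%N%:R <= 2 * Y.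
Proof.
move=> Y1.
have ex : exists k, Y <= (2 ^ k)%N%:R.
  exists (Num.trunc Y).+1; apply/ltW/(lt_le_trans (truncnS_gt Y)).
  by rewrite ler_nat ltnW // ltn_expl.
case: (ex_minnP ex) => k Yk minY; exists k; rewrite Yk /=.
case: k Yk minY => [|k] Yk minY; first by rewrite expn0; lra.
rewrite leNgt; apply/negP => Y2k.
have /minY : Y <= (2 ^ k)%N%:R by move: Y2k; rewrite expnS natrM; lra.
by rewrite ltnn.
Qed.

Lemma sqrtr_le_of_sqr (x y : R) : 0 <= y -> x <= y ^+ 2 -> Num.sqrt x <= y.
Proof.
by move=> y0 xy; rewrite -(ger0_norm y0) -sqrtr_sqr ler_sqrt // sqr_ge0.
Qed.

Lemma ler_sqrtMl (a r r' : R) : 0 <= r -> r <= r' ->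
  Num.sqrt (a * r) <= Num.sqrt (a * r').
Proof.
move=> r0 rr'; have [a0|a0] := leP 0 a.
  by rewrite ler_sqrt ?mulr_ge0 ?ler_wpM2l // (le_trans r0).
by rewrite (le_trans _ (sqrtr_ge0 _)) // sqrtr_le_of_sqr // expr0n /=; nra.
Qed.

Lemma xlnx_ge (x : R) : 0 <= x -> -1 <= x * ln x.
Proof.
move=> x0; have [x_le0|x_gt0] := leP x 0; first by rewrite ln0 // mulr0; lra.
have xV_gt0 : 0 < x^-1 by rewrite invr_gt0.
have : ln x^-1 <= x^-1 - 1.
  by have := @le_ln1Dx _ (x^-1 - 1); rewrite addrCA subrr addr0; apply; lra.
rewrite lnV ?posrE //.
have : x * x^-1 = 1 by rewrite divff //; lra.
nra.
Qed.

End RealBounds.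

Section Slack.
Context {R : realType}.

Definition slack_coef (d : nat) (delta : R) (t : nat) : R :=
  Acst (t%:R / 2) (delta / (2 * t%:R)) d / (t%:R / 2).

Lemma sig_RmRh_le_hat {n dl : R} {d r rh} :
  sig_RmRh n dl d r rh <= sig_hat_RmRh n dl d rh.
Proof. by rewrite ge_min lexx. Qed.

Lemma sig_RhmR_le_bar {n dl : R} {d r rh} :
  sig_RhmR n dl d r rh <= sig_bar_RhmR n dl d r.
Proof. by rewrite ge_min lexx. Qed.

Lemma ler_addr_sig_bar_RhmR {n dl : R} {d} r r' : 0 <= r -> r <= r' ->
  r + sig_bar_RhmR n dl d r <= r' + sig_bar_RhmR n dl d r'.
Proof.
by move=> r0 rr'; have := ler_sqrtMl (Acst n dl d / n) r0 rr'; rewrite /sig_bar_RhmR; lra.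
Qed.

Lemma sig_active_lt d delta t (eps rho r rh : R) : 0 < eps ->
  slack_coef d delta t <= eps / 16 -> slack_coef d delta t * rho <= eps ^+ 2 / 100 ->
  0 <= r <= rho -> 0 <= rh ->
  rh <= r + sig_bar_RhmR (t%:R / 2) (delta / (2 * t%:R)) d r ->
  sig_active d delta t rh < eps.
Proof.
move=> eps0 + + /andP[r0 r_rho] rh0.
rewrite /sig_active /sig_hat_RmRh /sig_bar_RhmR -/(slack_coef d delta t).
move: (slack_coef d delta t) => a a_small a_rho rh_le.
have [a0|a_neg] := leP 0 a; last first.
  (* [Acst] is negative when the argument of its logarithm is below 1; the square roots then vanish. *)
  rewrite [Num.sqrt (a * rh)]ler0_sqrtr ?addr0; last by nra.
  have : Num.sqrt (a * (rh + a)) <= - a by rewrite sqrtr_le_of_sqr //; nra.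
  lra.
have s_r : Num.sqrt (a * r) <= eps / 10 by rewrite sqrtr_le_of_sqr //; nra.
have s_rh : Num.sqrt (a * rh) <= eps / 7.
  rewrite sqrtr_le_of_sqr //; first lra.
  have : a * rh <= a * (rho + eps / 16 + eps / 10) by rewrite ler_wpM2l //; lra.
  nra.
have := sqrtr_ge0 (a * rh).
have : Num.sqrt (a * (rh + (a + Num.sqrt (a * rh)))) <= eps / 5.
  rewrite sqrtr_le_of_sqr //; first lra.
  have : a * rh <= a * (rho + eps / 16 + eps / 10) by rewrite ler_wpM2l //; lra.
  have : a * Num.sqrt (a * rh) <= eps / 16 * (eps / 7) by rewrite ler_pM //; exact: sqrtr_ge0.
  nra.
lra.
Qed.

Lemma ln_conf_ge1 (delta : R) : 0 < delta < 1 -> 1 <= ln (16 * expR 1 / delta).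
Proof.
move=> /andP[delta0 delta1]; rewrite -[leLHS](expRK 1) ler_ln ?posrE ?expR_gt0 //.
  by rewrite ler_pdivlMr //; have := expR_gt0 (1 : R); nra.
by rewrite divr_gt0 // mulr_gt0 // expR_gt0.
Qed.

Lemma slack_coef_mul_le d (delta : R) t : 0 < delta < 1 -> (0 < t)%N ->
  slack_coef d delta t * t%:R
    <= 8 * (d%:R + 1) * (ln (16 * expR 1 / delta) + 2 * ln t%:R).
Proof.
move=> /[dup] /ln_conf_ge1 K1 /andP[delta0 delta1] t_gt0.
have t1 : 1 <= t%:R :> R by rewrite ler1n.
have lnt0 : 0 <= ln (t%:R : R) by apply: ln_ge0.
have -> : slack_coef d delta t * t%:R = 2 * Acst (t%:R / 2) (delta / (2 * t%:R)) d.
  by rewrite /slack_coef; field; lra.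
rewrite /Acst; case: d => [|d]; first by rewrite !mulr0 mul0r; nra.
have d1 : 1 <= d.+1%:R :> R by rewrite ler1n.
have e0 := expR_gt0 (1 : R).
have -> : 16 * (t%:R / 2) * expR 1 / (d.+1%:R * (delta / (2 * t%:R))) =
          (16 * expR 1 / delta) * t%:R ^+ 2 / d.+1%:R :> R.
  by field; apply/and3P; split; apply/negP/negP; lra.
suff : ln ((16 * expR 1 / delta) * t%:R ^+ 2 / d.+1%:R)
         <= ln (16 * expR 1 / delta) + 2 * ln (t%:R : R) by nra.
have c0 : 0 < 16 * expR 1 / delta :> R by rewrite divr_gt0 // mulr_gt0.
have t2 : 0 < t%:R ^+ 2 :> R by rewrite exprn_gt0 //; lra.
have -> : 2 * ln (t%:R : R) = ln (t%:R ^+ 2) by rewrite lnXn ?mulr_natl //; lra.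
have c1 : 0 < 16 * expR 1 / delta * t%:R ^+ 2 :> R by rewrite mulr_gt0.
have d0 : 0 < d.+1%:R :> R by lra.
rewrite -lnM ?posrE // ler_ln ?posrE ?divr_gt0 //.
by rewrite ler_pdivrMr //; nra.
Qed.

Lemma mul_ln_le (K M t : R) : 0 < M -> 0 < t ->
  2 * M * (K + 2 * ln (4 * M)) <= t -> M * (K + 2 * ln t) <= t.
Proof.
move=> M0 t0 tb.
have q0 : 0 < t / (4 * M) by rewrite divr_gt0 //; lra.
have ln_t : ln t = ln (4 * M) + ln (t / (4 * M)).
  by rewrite -lnM ?posrE //; [congr ln; field; lra | lra].
have : ln (t / (4 * M)) <= t / (4 * M) - 1.
  by have := @le_ln1Dx _ (t / (4 * M) - 1); rewrite addrCA subrr addr0; apply; lra.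
have : M * (t / (4 * M)) = t / 4 by field; lra.
rewrite ln_t; nra.
Qed.

Lemma small_of_mul_le (a eps rho : R) : 0 < eps -> 0 <= rho ->
  a * (128 / eps + 800 * (rho / eps ^+ 2)) <= 8 ->
  a <= eps / 16 /\ a * rho <= eps ^+ 2 / 100.
Proof.
move=> eps0 rho0.
have [a0|a_gt0] := leP a 0.
  by split; [lra | have := mulr_le0_ge0 a0 rho0; have := sqr_ge0 eps; lra].
set u := eps^-1; have eps_u : eps * u = 1 by rewrite mulfV //; lra.
have u0 : 0 < u by rewrite invr_gt0.
rewrite -exprVn -/u mulrDr => coef_le.
have rho_part : 0 <= a * (800 * (rho * u ^+ 2)).
  exact: mulr_ge0 (ltW a_gt0) (mulr_ge0 (ler0n _ _) (mulr_ge0 rho0 (sqr_ge0 u))).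
have eps_part : 0 <= a * (128 * u) := mulr_ge0 (ltW a_gt0) (mulr_ge0 (ler0n _ _) (ltW u0)).
split.
- have : a * (128 * u) * eps <= 8 * eps by rewrite ler_wpM2r //; lra.
  have -> : a * (128 * u) * eps = 128 * a * (eps * u) by ring.
  rewrite eps_u; lra.
- have : a * (800 * (rho * u ^+ 2)) * eps ^+ 2 <= 8 * eps ^+ 2.
    by rewrite ler_wpM2r ?sqr_ge0 //; lra.
  have -> : a * (800 * (rho * u ^+ 2)) * eps ^+ 2 = 800 * (a * rho) * (eps * u) ^+ 2 by ring.
  rewrite eps_u expr1n; lra.
Qed.

End Slack.

Section StopBound.
Context {R : realType}.

(* 128 = 8·16 and 800 = 8·100: together with [slack_coef_mul_le] these constants yield the
   hypotheses of [sig_active_lt]. *)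
Definition stop_scale (d : nat) (eps rho : R) : R :=
  (d%:R + 1) * (128 / eps + 800 * (rho / eps ^+ 2)).

Definition stop_bound (d : nat) (delta eps rho : R) : R :=
  2 * stop_scale d eps rho
    * (ln (16 * expR 1 / delta) + 2 * ln (4 * stop_scale d eps rho)).

Definition count_const (d : nat) (delta : R) : R :=
  8000 * (d%:R + 1) * (ln (16 * expR 1 / delta) + 2 * ln (4000 * (d%:R + 1)) + 2).

Lemma stop_scale_ge (d : nat) (eps rho : R) : 0 < eps <= 1 -> 0 <= rho ->
  128 <= stop_scale d eps rho.
Proof.
move=> /andP[eps0 eps1] rho0; rewrite /stop_scale.
have : 128 <= 128 / eps by rewrite ler_pdivlMr //; lra.
have := mulr_ge0 (ler0n R 800) (divr_ge0 rho0 (sqr_ge0 eps)).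
have := ler0n R d; nra.
Qed.

Lemma slack_coef_small d (delta eps rho : R) t :
  0 < delta < 1 -> (0 < t)%N -> 0 < eps <= 1 -> 0 <= rho ->
  stop_bound d delta eps rho <= t%:R ->
  slack_coef d delta t <= eps / 16 /\ slack_coef d delta t * rho <= eps ^+ 2 / 100.
Proof.
move=> delta01 t_gt0 /[dup] eps01 /andP[eps0 _] rho0 large.
apply: small_of_mul_le => //.
have M_ge := stop_scale_ge d eps01 rho0.
have d0 : 0 < d%:R + 1 :> R by have := ler0n R d; lra.
have t0 : 0 < t%:R :> R by rewrite ltr0n.
have coef_t := slack_coef_mul_le d delta01 t_gt0.
have M0 : 0 < stop_scale d eps rho by apply: lt_le_trans M_ge; lra.
have scale_t := @mul_ln_le _ (ln (16 * expR 1 / delta)) _ _ M0 t0 large.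
move: coef_t scale_t; rewrite /stop_scale.
set a := slack_coef d delta t; set L := _ + 2 * ln _; set S := _ + 800 * _.
move=> coef_t scale_t.
have S0 : 0 <= S := addr_ge0 (divr_ge0 (ler0n R 128) (ltW eps0))
                             (mulr_ge0 (ler0n R 800) (divr_ge0 rho0 (sqr_ge0 eps))).
have coefM := ler_wpM2r (mulr_ge0 (ltW d0) S0) coef_t.
have scaleM := ler_wpM2l (mulr_ge0 (ler0n R 8) (ltW d0)) scale_t.
have : a * S * ((d%:R + 1) * t%:R) <= 8 * ((d%:R + 1) * t%:R) by nra.
by rewrite ler_pM2r //; exact: mulr_gt0.
Qed.

Lemma Mln_le_xlnx (K d' x M : R) : 0 <= K -> 1 <= d' -> 1 <= ln x ->
  1 <= 4 * M -> M <= 1000 * d' * x ->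
  2 * M * (K + 2 * ln (4 * M)) <= 2000 * d' * (K + 2 * ln (4000 * d') + 2) * (x * ln x).
Proof.
move=> K0 d1 lnx1 M1 Mx.
have x0 : 0 < x by rewrite ltNge; apply/negP => x0; move: lnx1; rewrite ln0 //; lra.
have lnM : ln (4 * M) <= ln (4000 * d') + ln x.
  by rewrite -lnM ?posrE ?ler_ln ?posrE; nra.
have lnM0 := @ln_ge0 _ (4 * M) M1.
have lnd0 : 0 <= ln (4000 * d') by apply: ln_ge0; lra.
have lnM_le : K + 2 * ln (4 * M) <= (K + 2 * ln (4000 * d') + 2) * ln x by nra.
have : 2 * M * (K + 2 * ln (4 * M)) <= 2 * (1000 * d' * x) * (K + 2 * ln (4 * M)).
  by apply: ler_wpM2r; lra.
have c0 : 0 <= 2000 * d' * x by apply: mulr_ge0; lra.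
have := ler_wpM2l c0 lnM_le; lra.
Qed.

Lemma count_const_gt0 d (delta : R) : 0 < delta < 1 -> 0 < count_const d delta.
Proof.
move=> /ln_conf_ge1 K1; have := ler0n R d; rewrite /count_const => d0.
have : 0 <= ln (4000 * (d%:R + 1)) :> R by apply: ln_ge0; lra.
nra.
Qed.

Lemma stop_bound_ge1 d (delta eps rho : R) : 0 < delta < 1 -> 0 < eps <= 1 -> 0 <= rho ->
  1 <= stop_bound d delta eps rho.
Proof.
move=> /ln_conf_ge1 K1 eps01 rho0; have M_ge := stop_scale_ge d eps01 rho0.
have : 0 <= ln (4 * stop_scale d eps rho) by apply: ln_ge0; lra.
rewrite /stop_bound; nra.
Qed.

Lemma scale_ln_le (K d' x b M : R) : 0 <= K -> 1 <= d' -> 2 <= ln x -> 0 <= b ->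
  M = d' * (128 * x + 800 * b) ->
  2 * M * (K + 2 * ln (4 * M))
    <= 4000 * d' * (K + 2 * ln (4000 * d') + 2) * (x * ln x + b * ln b).
Proof.
move=> K0 d1 lnx2 b0 M_def.
have x0 : 0 < x by rewrite ltNge; apply/negP => x0; move: lnx2; rewrite ln0 //; lra.
have x3 : 3 <= x by have := expR_ge1Dx (ln x); rewrite lnK ?posrE //; lra.
have M1 : 1 <= 4 * M by rewrite M_def; nra.
set Q := 2000 * d' * (K + 2 * ln (4000 * d') + 2).
have Q0 : 0 <= Q.
  have lnd0 : 0 <= ln (4000 * d') by apply: ln_ge0; lra.
  by rewrite /Q; apply: mulr_ge0; lra.
have blnb := xlnx_ge b0.
have xlnx : 6 <= x * ln x by nra.
suff : 2 * M * (K + 2 * ln (4 * M)) <= Q * (2 * (x * ln x + b * ln b)).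
  by rewrite /Q; lra.
have [bx|xb] := leP b x.
- have Mx : 2 * M * (K + 2 * ln (4 * M)) <= Q * (x * ln x).
    by apply: Mln_le_xlnx => //; first lra; rewrite M_def; nra.
  have : x * ln x <= 2 * (x * ln x + b * ln b) by lra.
  by move/(ler_wpM2l Q0)/(le_trans Mx).
- have lnb2 : 2 <= ln b by apply: (le_trans lnx2); rewrite ler_ln ?posrE; lra.
  have Mb : 2 * M * (K + 2 * ln (4 * M)) <= Q * (b * ln b).
    by apply: Mln_le_xlnx => //; first lra; rewrite M_def; nra.
  have : b * ln b <= 2 * (x * ln x + b * ln b) by nra.
  by move/(ler_wpM2l Q0)/(le_trans Mb).
Qed.

Lemma stop_bound_le d (delta eps rho : R) :
  0 < delta < 1 -> 0 < eps < expR (-2) -> 0 <= rho ->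
  2 * stop_bound d delta eps rho
    <= count_const d delta * (eps^-1 * ln eps^-1 + rho / eps ^+ 2 * ln (rho / eps ^+ 2)).
Proof.
move=> /ln_conf_ge1 K1 /andP[eps0 eps_small] rho0.
have d1 : 1 <= d%:R + 1 :> R by have := ler0n R d; lra.
have e2 := @expR_gt0 R 2.
have x_big : expR 2 < eps^-1.
  by rewrite -[expR 2]invrK -expRN ltf_pV2 ?posrE ?expR_gt0.
have lnx2 : 2 <= ln eps^-1.
  by rewrite -[leLHS](expRK 2) ler_ln ?posrE ?expR_gt0 //; lra.
have := @scale_ln_le _ (d%:R + 1) _ _ _ (ltW (lt_le_trans ltr01 K1)) d1 lnx2
  (divr_ge0 rho0 (sqr_ge0 eps)) erefl.
by rewrite /stop_bound /count_const /stop_scale; lra.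
Qed.

End StopBound.

Section RiskG.
Variables (R : realType) (dX : measure_display) (X : measurableType dX).
Variable P : probability (X * bool)%type R.
Implicit Types (A B C E : set (X * bool)) (G : set (X -> bool)) (f h : X -> bool).

Let pr A : R := fine (P A).

Let pr0 : pr set0 = 0.
Proof. by rewrite /pr measure0. Qed.

Let pr_setU A B : measurable A -> measurable B -> A `&` B = set0 ->
  pr (A `|` B) = pr A + pr B.
Proof. by move=> mA mB AB0; rewrite /pr measureU // fineD // fin_num_measure. Qed.

Let pr_le A B : measurable A -> measurable B -> A `<=` B -> pr A <= pr B.
Proof. by move=> mA mB AB; rewrite /pr fine_le ?fin_num_measure // le_measure // inE. Qed.

Let pr_subU A B C : measurable A -> measurable B -> measurable C ->
  A `<=` B `|` C -> pr A <= pr B + pr C.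
Proof.
move=> mA mB mC ABC; rewrite /pr -fineD ?fin_num_measure // fine_le ?fin_num_measure //.
  by rewrite fin_numD !fin_num_measure.
apply: le_trans (measureU2 _ mB mC).
by rewrite le_measure // inE //; exact: measurableU.
Qed.

Let pr_split E B : measurable E -> measurable B ->
  pr B = pr (E `&` B) + pr (~` E `&` B).
Proof.
move=> mE mB; rewrite -pr_setU; first by rewrite -setIUl setUv setTI.
- exact: measurableI.
- by apply: measurableI => //; exact: measurableC.
- by rewrite setIACA setICr set0I.
Qed.

Let measurable_preimage_bool h b : measurable_fun setT h -> measurable (h @^-1` [set b]).
Proof. by move=> mh; have := mh measurableT [set b] I; rewrite setTI. Qed.

Let measurable_mistake h : measurable_fun setT h ->
  measurable [set z : X * bool | h z.1 != z.2].
Proof.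
move=> mh.
have -> : [set z : X * bool | h z.1 != z.2] =
    (h @^-1` [set true] `*` [set false]) `|` (h @^-1` [set false] `*` [set true]).
  apply/seteqP; split => -[x y] /=.
  - by case: (h x); case: y => //= _; [left | right].
  - by case=> -[-> ->].
by apply: measurableU; apply: measurableX => //; exact: measurable_preimage_bool.
Qed.

Let measurable_disagree h1 h2 : measurable_fun setT h1 -> measurable_fun setT h2 ->
  measurable [set z : X * bool | h1 z.1 != h2 z.1].
Proof.
move=> mh1 mh2.
have -> : [set z : X * bool | h1 z.1 != h2 z.1] =
    ((h1 @^-1` [set true] `&` h2 @^-1` [set false]) `|`
     (h1 @^-1` [set false] `&` h2 @^-1` [set true])) `*` setT.
  apply/seteqP; split => -[x y] /=.
  - by case: (h1 x); case: (h2 x) => //= _; split => //; [left | right].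
  - by case=> -[] [-> ->].
apply: measurableX => //.
by apply: measurableU; apply: measurableI; exact: measurable_preimage_bool.
Qed.

Let agree_set G : set (X * bool) := [set z | AGR G z.1].

Let measurable_agree_set G : measurable (AGR G) -> measurable (agree_set G).
Proof.
move=> mA; have -> : agree_set G = AGR G `*` setT by apply/seteqP; split => -[x y] //= [].
exact: measurableX.
Qed.

(* On [AGR G] the relabelled example carries the common value of [G], which is that of [fs]. *)
Let riskGE G fs f : measurable (AGR G) -> measurable_fun setT fs ->
  measurable_fun setT f -> G fs ->
  riskG P G f = pr (agree_set G `&` [set z | f z.1 != fs z.1])
                + pr (~` agree_set G `&` [set z | f z.1 != z.2]).
Proof.
move=> mA mfs mf Gfs; rewrite /riskG -pr_setU.
- congr pr; rewrite /agree_set; apply/seteqP; split => z /=.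
  + case=> [[Az [g [Gg fg]]] | [nAz fz]]; [left | right] => //; split => //.
    by rewrite (Az fs g Gfs Gg).
  + by case=> [[Az ffs] | [nAz fz]]; [left; split => //; exists fs | right].
- by apply: measurableI; [exact: measurable_agree_set | exact: measurable_disagree].
- by apply: measurableI; [exact: measurableC (measurable_agree_set mA) | exact: measurable_mistake].
- by apply/seteqP; split => z // [[Az _] [nAz _]].
Qed.

Lemma riskG_le_risk G fs : measurable (AGR G) -> measurable_fun setT fs -> G fs ->
  riskG P G fs <= risk P fs.
Proof.
move=> mA mfs Gfs; rewrite (riskGE mA mfs mfs Gfs).
have -> : [set z : X * bool | fs z.1 != fs z.1] = set0.
  by apply/seteqP; split => z //=; rewrite eqxx.
rewrite setI0 pr0 add0r.
apply: pr_le => [||z []//]; last exact: measurable_mistake.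
by apply: measurableI; [exact: measurableC (measurable_agree_set mA) | exact: measurable_mistake].
Qed.

Lemma le_riskG G fs f : measurable (AGR G) -> measurable_fun setT fs ->
  measurable_fun setT f -> G fs -> risk P fs <= risk P f ->
  riskG P G fs <= riskG P G f.
Proof.
move=> mA mfs mf Gfs risk_le.
rewrite (riskGE mA mfs mfs Gfs) (riskGE mA mfs mf Gfs).
have -> : [set z : X * bool | fs z.1 != fs z.1] = set0.
  by apply/seteqP; split => z //=; rewrite eqxx.
rewrite setI0 pr0 add0r.
set E := agree_set G.
have mE : measurable E := measurable_agree_set mA.
have mfs_err := measurable_mistake mfs; have mf_err := measurable_mistake mf.
have mdis := measurable_disagree mf mfs.
have f_err_E : pr (E `&` [set z | f z.1 != z.2])
    <= pr (E `&` [set z | fs z.1 != z.2]) + pr (E `&` [set z | f z.1 != fs z.1]).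
  apply: pr_subU; try exact: measurableI.
  move=> z [Ez fz]; have [eq_f|neq_f] := eqVneq (f z.1) (fs z.1); last by right.
  by left; split => //=; rewrite -eq_f.
have : 0 <= pr (E `&` [set z | fs z.1 != z.2]) := fine_ge0 (measure_ge0 _ _).
move: risk_le; rewrite /risk -/(pr _) -/(pr _) (pr_split mE mfs_err) (pr_split mE mf_err).
lra.
Qed.

End RiskG.

Lemma Rhat_ge0 (R : realType) (X : Type) xs yl t (f : X -> bool) : 0 <= Rhat R xs yl t f.
Proof. by rewrite /Rhat divr_ge0 // ler0n. Qed.

Lemma is_pow2_gt0 t : is_pow2 t -> (0 < t)%N.
Proof. by case=> i ->; rewrite expn_gt0. Qed.

Section ActiveILESS.
Variables (R : realType) (dX : measure_display) (X : measurableType dX).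
Variables (F : set (X -> bool)) (P : probability (X * bool)%type R) (fstar : X -> bool).
Variables (d : nat) (delta eps : R) (xs : nat -> X) (ys : nat -> bool).
Variables (G : nat -> set (X -> bool)) (yl : nat -> bool) (fh : nat -> X -> bool).
Hypotheses (mF : forall f, F f -> measurable_fun setT f)
  (mAGR : forall H, H `<=` F -> measurable (AGR H))
  (Ffstar : F fstar) (fstar_min : forall f, F f -> risk P fstar <= risk P f)
  (run : is_run F d delta xs ys G yl fh) (K : eventK P F d delta eps xs G yl fh).

Local Notation reached := (reached d delta eps xs yl fh).
Local Notation Rhat := (Rhat R xs yl).

Lemma Rhat_fstar_le t : is_pow2 t -> reached t -> G t.-1 fstar -> G t.-1 `<=` F ->
  Rhat t fstar <= Rhat t (fh t) + sig_active d delta t (Rhat t (fh t)).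
Proof.
move=> pow2t reach_t Gfstar GF; have [_ [_ [erm _]]] := run.
have [Ffh _] := erm t (is_pow2_gt0 pow2t) pow2t.
have mA := mAGR GF.
have [K_fh _] := K pow2t reach_t Ffh; have [_ K_fstar] := K pow2t reach_t Ffstar.
set r := riskG P (G t.-1) fstar in K_fstar.
have r0 : 0 <= r := fine_ge0 (measure_ge0 _ _).
have r_le : r <= riskG P (G t.-1) (fh t) :=
  le_riskG mA (mF Ffstar) (mF Ffh) Gfstar (fstar_min Ffh).
have fstar_le := le_trans K_fstar (lerD (lexx r) sig_RhmR_le_bar).
have fh_le := le_trans K_fh (lerD (lexx _) sig_RmRh_le_hat).
apply: (le_trans fstar_le).
apply: (le_trans (ler_addr_sig_bar_RhmR r0 (le_trans r_le fh_le))).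
by rewrite -addrA.
Qed.

Lemma fstar_survives t : reached t.+1 -> G t fstar /\ G t `<=` F.
Proof.
have [G0 [_ [_ [G_pow2 G_other]]]] := run.
elim: t => [|t IH] reach; first by rewrite G0; split.
have reach' := reached_le (leqnSn _) reach.
have [Gfstar GF] := IH reach'.
have [pow2|not_pow2] := pselect (is_pow2 t.+1); last by rewrite G_other.
rewrite G_pow2 //; split => [|f []//]; split => //.
exact: Rhat_fstar_le.
Qed.

Lemma stops_pow2 k : 0 < delta < 1 -> 0 < eps <= 1 ->
  stop_bound d delta eps (risk P fstar) <= (2 ^ k)%N%:R ->
  reached (2 ^ k) -> stops d delta eps xs yl fh (2 ^ k).
Proof.
move=> delta01 /[dup] eps01 /andP[eps0 _] large reach.
have pow2 : is_pow2 (2 ^ k) by exists k.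
have t_gt0 := is_pow2_gt0 pow2.
split => //; have [_ [_ [erm _]]] := run.
have [Gfstar GF] : G (2 ^ k).-1 fstar /\ G (2 ^ k).-1 `<=` F.
  by apply: fstar_survives; rewrite prednK.
have [_ fh_min] := erm _ t_gt0 pow2.
have [_ K_fstar] := K pow2 reach Ffstar.
have rho0 : 0 <= risk P fstar := fine_ge0 (measure_ge0 _ _).
have [a_small a_rho] := slack_coef_small delta01 t_gt0 eps01 rho0 large.
apply: (sig_active_lt (r := riskG P (G (2 ^ k).-1) fstar) eps0 a_small a_rho).
- by rewrite (riskG_le_risk P (mAGR GF) (mF Ffstar) Gfstar) andbT; apply/fine_ge0/measure_ge0.
- exact: Rhat_ge0.
- exact: le_trans (fh_min _ Ffstar) (le_trans K_fstar (lerD (lexx _) sig_RhmR_le_bar)).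
Qed.

End ActiveILESS.

Theorem lemma14 (R : realType) (d : nat) (delta : R) :
  0 < delta < 1 ->
  exists (C eps0 : R), 0 < C /\ 0 < eps0 /\
  forall (dX : measure_display) (X : measurableType dX)
    (F : set (X -> bool)) (P : probability (X * bool)%type R)
    (fstar : X -> bool) (eps : R)
    (xs : nat -> X) (ys : nat -> bool)
    (G : nat -> set (X -> bool)) (yl : nat -> bool) (fh : nat -> X -> bool),
  VCdim F d ->
  (forall f, F f -> measurable_fun setT f) ->
  (forall H, H `<=` F -> measurable (AGR H)) ->
  F fstar -> (forall f, F f -> risk P fstar <= risk P f) ->
  0 < eps < eps0 ->
  is_run F d delta xs ys G yl fh ->
  eventK P F d delta eps xs G yl fh ->
  exists T : nat,
    stops d delta eps xs yl fh T /\ reached d delta eps xs yl fh T /\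
    T%:R <= C * (eps^-1 * ln (eps^-1)
                 + risk P fstar / eps ^+ 2 * ln (risk P fstar / eps ^+ 2)).
Proof.
move=> delta01; exists (count_const d delta), (expR (-2)).
split; first exact: count_const_gt0.
split; first exact: expR_gt0.
(* The VC dimension enters only through the event K; below [e^-2], [ln(1/ε) >= 2]
   absorbs the additive constants of the bound. *)
move=> dX X F P fstar eps xs ys G yl fh _ mF mAGR Ffstar fstar_min eps_range run K.
have /andP[eps0 eps_small] := eps_range.
have eps01 : 0 < eps <= 1.
  by rewrite eps0 (le_trans (ltW eps_small)) // expR_le1; lra.
have rho0 : 0 <= risk P fstar := fine_ge0 (measure_ge0 _ _).
have [k /andP[large small]] := exists_pow2_between (stop_bound_ge1 d delta01 eps01 rho0).
have [T leT [stopT reachT]] :=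
  exists_first (stops_pow2 mF mAGR Ffstar fstar_min run K delta01 eps01 large).
exists T; split => //; split => //.
apply: le_trans (stop_bound_le d delta01 eps_range rho0).
by apply: le_trans small; rewrite ler_nat.
Qed.
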